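(* Let $K^-$ be the graph obtained from the complete graph $K_4$ on vertices $v_1,v_2,v_3,v_4$ by deleting the edge $v_1v_2$. Let $c$ be any $(4,1)$-coloring of $K^-$, and let $D_c(K^-)$ be the associated digraph. All differences of colors below are taken in $\mathbb{Z}_4$. (a) If $c(v_1)=c(v_2)$, then $D_c(K^-)$ is acyclic and has no directed path between $v_1$ and $v_2$ (in either direction). (b) If $c(v_1)-c(v_2)=1$, then $D_c(K^-)$ is acyclic and has a directed path from $v_1$ to $v_2$. (c) If $c(v_1)-c(v_2)=2$, then $D_c(K^-)$ contains a directed cycle.
   Context: For positive integers $p,q$, a $(p,q)$-coloring of a graph $G$ is a map $c:V(G)\to\{0,1,\dots,p-1\}$ such that for every edge $xy\in E(G)$ one has $q\le |c(x)-c(y)|\le p-q$. A $(4,1)$-coloring is thus an ordinary proper coloring with colors $\{0,1,2,3\}$. For a $(p,q)$-coloring $c$ of $G$, $D_c(G)$ is the digraph with vertex set $V(G)$ which, for each edge $xy$ of $G$, contains the arc $(x,y)$ whenever $c(y)-c(x)\equiv q \pmod p$. *)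

From mathcomp Require Import all_boot.
Set Implicit Arguments. Unset Strict Implicit. Unset Printing Implicit Defensive.

Definition absdiff (a b : nat) : nat := if a <= b then b - a else a - b.

Definition pq_coloring (T : finType) (E : rel T) (p q : nat) (c : T -> nat) : Prop :=
  (forall x, c x < p) /\
  (forall x y, E x y -> q <= absdiff (c x) (c y) <= p - q).

(* arcs of D_c(G): (x,y) whenever xy is an edge and c(y) - c(x) = q (mod p).
   Colors lie in [0,p), so c y + p - c x is the non-truncated difference + p. *)
Definition Dc_arc (T : finType) (E : rel T) (p q : nat) (c : T -> nat) : rel T :=
  fun x y => E x y && ((c y + p - c x) %% p == q %% p).

Definition has_dicycle (T : finType) (a : rel T) : Prop :=
  exists s : seq T, [/\ s != [::], uniq s & cycle a s].

Definition acyclic (T : finType) (a : rel T) : Prop := ~ has_dicycle a.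

Definition dipath (T : finType) (a : rel T) (u v : T) : Prop :=
  exists s : seq T, path a u s /\ last u s = v.

(* K^- : K_4 on vertices v1,v2,v3,v4 (= 0,1,2,3) minus the edge v1 v2 *)
Definition Kminus : rel 'I_4 :=
  fun x y => (x != y) && ~~ ((val x == 0) && (val y == 1) || (val x == 1) && (val y == 0)).

Definition v1 : 'I_4 := @Ordinal 4 0 isT.
Definition v2 : 'I_4 := @Ordinal 4 1 isT.

Definition zdiff4 (a b : nat) : nat := (a + 4 - b) %% 4.

From mathcomp Require Import all_boot zify.

(* Along an arc of D_c the color goes up by exactly 1 mod p, so a walk of
   length n shifts colors by n mod p.  A directed cycle, or a walk between
   two distinct vertices of equal color, therefore has length divisible by p
   and passes through p consecutive vertices of pairwise distinct colors;
   on a graph with only p vertices this forces c to be injective, which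
   gives (a).  For (b), a directed cycle would then visit every vertex,
   and the successor of v2 on it, having color c(v2) + 1, would be v1,
   although v1v2 is not an edge.  In (b) and (c) the colors of v3 and v4
   are the two colors missed by v1 and v2, and listing the vertices by
   increasing color gives the required path, resp. 4-cycle. *)

Set Implicit Arguments.
Unset Strict Implicit.
Unset Printing Implicit Defensive.

Lemma uniq_map_inj_in (T1 T2 : eqType) (f : T1 -> T2) (s : seq T1) :
  uniq (map f s) -> {in s &, injective f}.
Proof.
elim: s => [|x s IH] //= /andP[fx_notin uniq_fs] y z.
rewrite !inE => /predU1P[->|ys] /predU1P[->|zs] // fyz.
- by case/negP: fx_notin; rewrite fyz map_f.
- by case/negP: fx_notin; rewrite -fyz map_f.
- exact: IH.
Qed.

Lemma uniq_full (T : finType) (s : seq T) :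
  uniq s -> size s = #|T| -> forall x, x \in s.
Proof.
move=> /card_uniqP card_s size_s x.
have /subset_cardP full_s : #|s| = #|predT : {pred T}| by rewrite card_s size_s.
by rewrite (full_s (subset_predT _)).
Qed.

Lemma eqn_mod_subS p a b : a < p -> b < p ->
  ((a + p - b) %% p == 1 %% p) = (a == b.+1 %% p).
Proof.
move=> a_lt b_lt; have le_b : b <= a + p by rewrite ltnW // ltn_addl.
by rewrite -(eqn_modDr b) subnK // modnDr (modn_small a_lt) add1n.
Qed.

Lemma pq_coloring_neq (T : finType) (E : rel T) p q c x y :
  pq_coloring E p q c -> 0 < q -> E x y -> c x != c y.
Proof.
move=> [_ c_edge] q_gt0 /c_edge /andP[+ _].
by apply: contraTneq => ->; rewrite /absdiff leqnn subnn -ltnNge.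
Qed.

Section ColorWalks.

Variables (T : finType) (E : rel T) (p : nat) (c : T -> nat).
Hypothesis c_lt : forall x, c x < p.

Local Notation D := (Dc_arc E p 1 c).

Lemma Dc_arcE x y : D x y = E x y && (c y == (c x).+1 %% p).
Proof. by rewrite /Dc_arc eqn_mod_subS. Qed.

Lemma Dc_path_colors u s : path D u s ->
  map c (u :: s) = [seq (c u + i) %% p | i <- iota 0 (size s).+1].
Proof.
elim: s u => [|x s IH] u; first by rewrite /= addn0 modn_small.
rewrite [path _ _ _]/= Dc_arcE => /andP[/andP[_ /eqP cx] /IH colors_xs].
have -> : iota 0 (size (x :: s)).+1 = 0 :: map (addn 1) (iota 0 (size s).+1).
  by rewrite -iotaDl.
rewrite map_cons colors_xs map_cons -map_comp addn0 modn_small //.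
by congr (_ :: _); apply: eq_map => i /=; rewrite cx modnDml add1n addSnnS.
Qed.

Lemma Dc_path_last u s : path D u s -> c (last u s) = (c u + size s) %% p.
Proof.
elim: s u => [|x s IH] u /=; first by rewrite addn0 modn_small.
rewrite Dc_arcE => /andP[/andP[_ /eqP cx] /IH ->].
by rewrite cx modnDml addSnnS.
Qed.

Lemma Dc_path_same_color u s :
  path D u s -> c (last u s) = c u -> p %| size s.
Proof.
move/Dc_path_last => -> /eqP.
by rewrite -{2}(modn_small (c_lt u)) -{2}(addn0 (c u)) eqn_modDl mod0n.
Qed.

Hypothesis card_T : #|T| = p.

Lemma Dc_long_path_inj u s : path D u s -> p <= (size s).+1 -> injective c.
Proof.
move=> Dus long_s; set w := take p (u :: s).
have colors_w : map c w = [seq (c u + i) %% p | i <- iota 0 p].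
  by rewrite map_take Dc_path_colors // -map_take take_iota (minn_idPl long_s).
have uniq_cw : uniq (map c w).
  rewrite colors_w map_inj_in_uniq ?iota_uniq // => i j.
  rewrite !mem_iota !add0n => i_lt j_lt /eqP.
  by rewrite eqn_modDl !modn_small // => /eqP.
have w_full : forall x, x \in w.
  by apply: uniq_full; [exact: map_uniq uniq_cw | rewrite size_takel].
by move=> x y; apply: uniq_map_inj_in uniq_cw _ _ (w_full x) (w_full y).
Qed.

Lemma Dc_cycle_size s : s != [::] -> uniq s -> cycle D s -> size s = p.
Proof.
case: s => [//|x s] _ uniq_s /= /Dc_path_same_color.
rewrite last_rcons size_rcons => /(_ erefl) p_dvd.
apply/eqP; rewrite eqn_leq (dvdn_leq _ p_dvd) // andbT -card_T.
by rewrite -[(size s).+1](card_uniqP uniq_s) max_card.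
Qed.

Lemma Dc_cycle_inj : has_dicycle D -> injective c.
Proof.
case=> [[|x s] [s_nil uniq_s cycle_s]]; first by [].
apply: (@Dc_long_path_inj x (rcons s x)) => //.
by rewrite size_rcons -(Dc_cycle_size s_nil uniq_s cycle_s).
Qed.

Lemma Dc_cycle_full s :
  s != [::] -> uniq s -> cycle D s -> forall x, x \in s.
Proof.
move=> s_nil uniq_s cycle_s.
by apply: uniq_full; rewrite // card_T Dc_cycle_size.
Qed.

Lemma Dc_dipath_same_color_inj u v :
  u != v -> c u = c v -> dipath D u v -> injective c.
Proof.
move=> neq_uv cuv [s [Dus last_s]].
have s_gt0 : 0 < size s.
  by case: s Dus last_s => // _ /= eq_uv; rewrite eq_uv eqxx in neq_uv.
have p_dvd : p %| size s by apply: Dc_path_same_color Dus _; rewrite last_s.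
by apply: (Dc_long_path_inj Dus); rewrite ltnW // ltnS dvdn_leq.
Qed.

End ColorWalks.

Lemma mod4_succ_path_order a b d e :
  a < 4 -> b < 4 -> d < 4 -> e < 4 -> (a + 4 - b) %% 4 = 1 ->
  a != d -> a != e -> b != d -> b != e -> d != e ->
  (d = a.+1 %% 4 /\ e = d.+1 %% 4 /\ b = e.+1 %% 4) \/
  (e = a.+1 %% 4 /\ d = e.+1 %% 4 /\ b = d.+1 %% 4).
Proof. by move=> *; lia. Qed.

Lemma mod4_antipodal_cycle_order a b d e :
  a < 4 -> b < 4 -> d < 4 -> e < 4 -> (a + 4 - b) %% 4 = 2 ->
  a != d -> a != e -> b != d -> b != e -> d != e ->
  (d = a.+1 %% 4 /\ b = d.+1 %% 4 /\ e = b.+1 %% 4 /\ a = e.+1 %% 4) \/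
  (e = a.+1 %% 4 /\ b = e.+1 %% 4 /\ d = b.+1 %% 4 /\ a = d.+1 %% 4).
Proof. by move=> *; lia. Qed.

Definition v3 : 'I_4 := @Ordinal 4 2 isT.
Definition v4 : 'I_4 := @Ordinal 4 3 isT.

Section KminusColorings.

Variable c : 'I_4 -> nat.
Hypothesis c_col : pq_coloring Kminus 4 1 c.

Local Notation D := (Dc_arc Kminus 4 1 c).

Let c_lt : forall x, c x < 4. Proof. by case: c_col. Qed.

Let Kminus_color_bounds : [/\ c v1 < 4, c v2 < 4, c v3 < 4 & c v4 < 4].
Proof. by split; apply: c_lt. Qed.

Lemma Kminus_colors_neq :
  [/\ c v1 != c v3, c v1 != c v4, c v2 != c v3, c v2 != c v4 & c v3 != c v4].
Proof. by split; apply: (pq_coloring_neq c_col). Qed.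

Lemma Kminus_same_color_acyclic : c v1 = c v2 ->
  acyclic D /\ ~ dipath D v1 v2 /\ ~ dipath D v2 v1.
Proof.
move=> c12; have not_inj : ~ injective c by move/(_ v1 v2 c12).
have no_dipath u v : u != v -> c u = c v -> ~ dipath D u v.
  by move=> neq_uv cuv /(Dc_dipath_same_color_inj c_lt (card_ord 4) neq_uv cuv).
split; first by move/(Dc_cycle_inj c_lt (card_ord 4)).
by split; apply: no_dipath.
Qed.

Lemma Kminus_succ_color_acyclic : zdiff4 (c v1) (c v2) = 1 -> acyclic D.
Proof.
move=> /eqP z12 cyc; have c_inj := Dc_cycle_inj c_lt (card_ord 4) cyc.
have c1 : c v1 = (c v2).+1 %% 4 by apply/eqP; rewrite -eqn_mod_subS.
case: cyc => s [s_nil uniq_s cycle_s].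
have v2_in_s := Dc_cycle_full c_lt (card_ord 4) s_nil uniq_s cycle_s v2.
have := next_cycle cycle_s v2_in_s.
rewrite (Dc_arcE _ c_lt) -c1 => /andP[E_v2_next /eqP /c_inj next_v1].
by rewrite next_v1 in E_v2_next.
Qed.

Lemma Kminus_succ_color_dipath : zdiff4 (c v1) (c v2) = 1 -> dipath D v1 v2.
Proof.
rewrite /zdiff4 => z12.
have [b1 b2 b3 b4] := Kminus_color_bounds.
have [n13 n14 n23 n24 n34] := Kminus_colors_neq.
have [[e3 [e4 e2]]|[e4 [e3 e2]]] :=
  mod4_succ_path_order b1 b2 b3 b4 z12 n13 n14 n23 n24 n34.
- exists [:: v3; v4; v2]; split=> //=.
  by rewrite !(Dc_arcE _ c_lt) -e3 -e4 -e2 !eqxx.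
- exists [:: v4; v3; v2]; split=> //=.
  by rewrite !(Dc_arcE _ c_lt) -e3 -e4 -e2 !eqxx.
Qed.

Lemma Kminus_antipodal_dicycle : zdiff4 (c v1) (c v2) = 2 -> has_dicycle D.
Proof.
rewrite /zdiff4 => z12.
have [b1 b2 b3 b4] := Kminus_color_bounds.
have [n13 n14 n23 n24 n34] := Kminus_colors_neq.
have [[e3 [e2 [e4 e1]]]|[e4 [e2 [e3 e1]]]] :=
  mod4_antipodal_cycle_order b1 b2 b3 b4 z12 n13 n14 n23 n24 n34.
- exists [:: v1; v3; v2; v4]; split=> //=.
  by rewrite !(Dc_arcE _ c_lt) -e1 -e2 -e3 -e4 !eqxx.
- exists [:: v1; v4; v2; v3]; split=> //=.
  by rewrite !(Dc_arcE _ c_lt) -e1 -e2 -e3 -e4 !eqxx.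
Qed.

End KminusColorings.

Theorem lemma1 (c : 'I_4 -> nat) :
  pq_coloring Kminus 4 1 c ->
  let D := Dc_arc Kminus 4 1 c in
  [/\ (c v1 = c v2 ->
         acyclic D /\ ~ dipath D v1 v2 /\ ~ dipath D v2 v1),
      (zdiff4 (c v1) (c v2) = 1 ->
         acyclic D /\ dipath D v1 v2)
    & (zdiff4 (c v1) (c v2) = 2 -> has_dicycle D)].
Proof.
move=> c_col D; split.
- exact: Kminus_same_color_acyclic.
- split; first exact: Kminus_succ_color_acyclic.
  exact: Kminus_succ_color_dipath.
- exact: Kminus_antipodal_dicycle.
Qed.
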